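(* Let $2 \le k \le n$ be integers. Then $$N(OM,k,n)=\begin{cases} \left\lceil \frac{n-1}{k-1} \right\rceil & \text{if } n \text{ is even},\\[2pt] \left\lceil \frac{n-2}{k-1} \right\rceil & \text{if } n \text{ is odd.}\end{cases}$$
   Context: We are given $n$ balls, namely the set $[n]=\{1,\dots,n\}$, each colored with one of two colors (say red and blue) by an unknown coloring. A ball $i$ is a majority ball if more than $n/2$ balls have the same color as $i$. A query is a subset $Q\subseteq[n]$ with $|Q|=k$. In the Output (Partition) Model (OM), the answer to a query $Q$ is the unordered partition $\{Q',Q''\}$ of $Q$ into the set of balls of one color and the set of balls of the other color (one part may be empty), with no indication of which color is which. A non-adaptive strategy is a family of queries $Q_1,\dots,Q_q$ fixed in advance (all asked simultaneously). It succeeds if for every coloring and every sequence of answers consistent with it, the answers determine the outcome: either every coloring consistent with these answers has no majority ball (and then we declare that there is none), or there is a ball that is a majority ball in every coloring consistent with these answers. $N(OM,k,n)$ denotes the minimum number $q$ of queries in a successful non-adaptive strategy in this model. *)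

From mathcomp Require Import all_boot.
Set Implicit Arguments. Unset Strict Implicit. Unset Printing Implicit Defensive.

Definition coloring (n : nat) := {ffun 'I_n -> bool}.

(* Answer of the Output (Partition) Model to query Q: the unordered partition
   of Q into its two color classes (a part may be empty), represented as the
   set of the two parts, with no indication of which color is which. *)
Definition answer (n : nat) (c : coloring n) (Q : {set 'I_n}) : {set {set 'I_n}} :=
  [set [set i in Q | c i]; [set i in Q | ~~ c i]].

Definition majority_ball (n : nat) (c : coloring n) (i : 'I_n) : bool :=
  n < 2 * #|[set j | c j == c i]|.

Definition consistent (n : nat) (qs : seq {set 'I_n}) (c c' : coloring n) : bool :=
  all (fun Q : {set 'I_n} => answer c' Q == answer c Q) qs.

Definition successful (n k : nat) (qs : seq {set 'I_n}) : Prop :=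
  all (fun Q : {set 'I_n} => #|Q| == k) qs /\
  forall c : coloring n,
    (forall c', consistent qs c c' -> forall i, ~~ majority_ball c' i) \/
    (exists i : 'I_n, forall c', consistent qs c c' -> majority_ball c' i).

Definition ceildiv (a b : nat) : nat := (a + b.-1) %/ b.

Definition N_OM_formula (k n : nat) : nat :=
  if ~~ odd n then ceildiv (n - 1) (k - 1) else ceildiv (n - 2) (k - 1).

From mathcomp Require Import all_boot zify.
Set Implicit Arguments. Unset Strict Implicit. Unset Printing Implicit Defensive.

(* Call a set of balls closed if no query meets both it and its complement;
   swapping the two colours on a closed set changes no answer.  A query of size
   k merges at most k - 1 of the classes of balls that no query separates, so
   with q (k - 1) < n - 1 (n even), resp. < n - 2 (n odd), at least two, resp.
   three, classes remain.  For n even, a closed set G with 2 |G| <= n lies in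
   the red half of a balanced colouring, which has no majority ball, while
   swapping G creates one.  For n odd there is always a majority ball, but with
   three classes some colouring turns every ball into a minority ball after a
   suitable swap on a closed set.
   Conversely, windows of k consecutive balls, each overlapping the next in one
   ball, determine the colouring up to a global swap on the first q (k - 1) + 1
   balls.  These are all balls for n even, and all but the last one for n odd;
   then either the first n - 1 balls already have a majority colour, or they
   split evenly and the last ball is a majority ball whatever its colour. *)

Lemma eq_addb_eq (a a' b b' : bool) : a (+) a' = b (+) b' -> (a == b) = (a' == b').
Proof. by case: a; case: a'; case: b; case: b'. Qed.

Lemma subset_card_between (T : finType) (G A : {set T}) m :
  G \subset A -> #|G| <= m <= #|A| ->
  exists R : {set T}, [/\ G \subset R, R \subset A & #|R| = m].
Proof.
move=> GA /andP[Gm mA].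
have : m - #|G| <= #|A :\: G| by rewrite cardsD (setIidPr GA); lia.
case/card_geqP => s [s_uniq s_size sAG].
have sA x : x \in s -> x \in A by move/sAG; rewrite inE => /andP[].
have sG : G :&: [set x in s] = set0.
  by apply/setP => x; rewrite !inE; apply/andP => -[Gx /sAG]; rewrite inE Gx.
exists (G :|: [set x in s]); split; first exact: subsetUl.
  by rewrite subUset GA; apply/subsetP => x; rewrite inE => /sA.
by rewrite cardsU sG cards0 cardsE (card_uniqP s_uniq) s_size; lia.
Qed.

Lemma exists_query_labelling (T : finType) k (qs : seq {set T}) :
  {in qs, forall Q : {set T}, #|Q| <= k} ->
  exists g : T -> T, (forall Q, Q \in qs -> {in Q &, forall x y, g x = g y}) /\
                     #|T| <= #|g @: T| + size qs * (k - 1).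
Proof.
elim: qs => [|Q qs IH] sizes /=.
  by exists id; split=> //; rewrite card_imset ?addn0 //; exact: inj_id.
have [|g [g_const g_card]] := IH; first by move=> Q' Q'qs; apply: sizes; rewrite inE Q'qs orbT.
case: (set_0Vmem Q) => [Q0 | [x0 Qx0]].
  exists g; split; last by apply: leq_trans g_card _; rewrite leq_add2l mulSn leq_addl.
  by move=> Q'; rewrite inE => /orP[/eqP -> | /g_const //]; rewrite Q0 => x; rewrite inE.
pose merge y := if y \in g @: Q then g x0 else y.
exists (merge \o g); split.
  move=> Q'; rewrite inE => /orP[/eqP -> | /g_const g_Q'] x y Qx Qy /=.
    by rewrite /merge !imset_f.
  by rewrite (g_Q' x y Qx Qy).
have gQ_sub : g @: Q \subset g @: T by apply: imsetS; apply/subsetP.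
have merged : g x0 |: (g @: T :\: g @: Q) \subset (merge \o g) @: T.
  apply/subsetP => y; rewrite !inE => /orP[/eqP -> | /andP[yQ /imsetP[x _ y_gx]]].
    by apply/imsetP; exists x0; rewrite // /= /merge imset_f.
  by apply/imsetP; exists x => //=; rewrite /merge -y_gx (negbTE yQ).
have labels_lost : #|g @: T| <= #|(merge \o g) @: T| + (k - 1).
  have := subset_leq_card merged.
  rewrite cardsU1 !inE imset_f //= cardsD (setIidPr gQ_sub).
  have : #|g @: Q| <= k by apply: leq_trans (leq_imset_card _ _) (sizes _ _); rewrite inE eqxx.
  have : 0 < #|g @: Q| by rewrite card_gt0; apply/set0Pn; exists (g x0); rewrite imset_f.
  have := subset_leq_card gQ_sub; lia.
by apply: leq_trans g_card _; rewrite mulSn addnA leq_add2r.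
Qed.

Section Majority.

Variable n : nat.
Implicit Types (c : coloring n) (A B F G Q R S : {set 'I_n}) (qs : seq {set 'I_n}).

Lemma cardsC_ord A : #|~: A| = n - #|A|.
Proof. by rewrite -(addKn #|A| #|~: A|) cardsC card_ord. Qed.

Lemma card_le_ord A : #|A| <= n.
Proof. by rewrite -[leqRHS]card_ord max_card. Qed.

Lemma disjoint_majority_card A F : [disjoint A & F] -> n < 2 * #|F| -> 2 * #|A| < n.
Proof.
rewrite disjoints_subset => /subset_leq_card; rewrite cardsC_ord.
by have := card_le_ord F; lia.
Qed.

Definition flip c F : coloring n := [ffun i => c i (+) (i \in F)].

Definition coloring_of A : coloring n := [ffun i => i \in A].

Lemma answer_eqP c c' Q :
  answer c' Q = answer c Q <-> {in Q &, forall x y, c' x (+) c x = c' y (+) c y}.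
Proof.
split=> [eq_ans x y Qx Qy | const].
  pose Sx := [set i in Q | c' i == c' x].
  have : Sx \in answer c Q.
    rewrite -eq_ans !inE; apply/orP.
    by case cx: (c' x); [left | right]; apply/eqP/setP => i; rewrite /Sx !inE cx ?eqb_id ?eqbF_neg.
  rewrite !inE => /orP[] /eqP /setP Sx_eq; have := Sx_eq x; have := Sx_eq y;
    by rewrite !inE Qx Qy eqxx /=; case: (c' x) (c' y) (c x) (c y) => [] [] [] [].
case: (set_0Vmem Q) => [-> | [x0 Qx0]].
  by rewrite /answer; congr [set _; _]; apply/setP => i; rewrite !inE.
have c'E i : i \in Q -> c' i = c i (+) (c' x0 (+) c x0).
  by move=> Qi; rewrite -(const i x0 Qi Qx0) addbCA addbb addbF.
rewrite /answer; case: (c' x0 (+) c x0) c'E => c'E; last first.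
  by congr [set _; _]; apply/setP => i; rewrite !inE;
    case Qi: (i \in Q); rewrite //= c'E ?addbF.
rewrite setUC; congr [set _; _]; apply/setP => i; rewrite !inE;
  by case Qi: (i \in Q); rewrite //= c'E ?addbT ?negbK.
Qed.

Lemma consistent_refl qs c : consistent qs c c.
Proof. by apply/allP => Q _; rewrite eqxx. Qed.

Definition query_closed qs F :=
  forall Q, Q \in qs -> {in Q &, forall x y, (x \in F) = (y \in F)}.

Lemma query_closedC qs F : query_closed qs F -> query_closed qs (~: F).
Proof. by move=> closedF Q Qqs x y Qx Qy; rewrite !inE (closedF Q Qqs x y Qx Qy). Qed.

Lemma query_closed_preimset qs (g : 'I_n -> 'I_n) (L : {set 'I_n}) :
  (forall Q, Q \in qs -> {in Q &, forall x y, g x = g y}) ->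
  query_closed qs (g @^-1: L).
Proof. by move=> g_const Q Qqs x y Qx Qy; rewrite !inE (g_const Q Qqs x y Qx Qy). Qed.

Lemma consistent_flip qs c F : query_closed qs F -> consistent qs c (flip c F).
Proof.
move=> closedF; have flipE x : flip c F x (+) c x = (x \in F) by rewrite ffunE addbAC addbb.
by apply/allP => Q Qqs; apply/eqP/answer_eqP => x y Qx Qy; rewrite !flipE; exact: (closedF Q Qqs).
Qed.

Lemma flip_coloring_of_disjoint A F :
  [disjoint A & F] -> flip (coloring_of A) F = coloring_of (A :|: F).
Proof.
move=> AF; apply/ffunP => i; rewrite !ffunE !inE.
by case Ai: (i \in A); rewrite ?(disjointFr AF Ai).
Qed.

Lemma flip_coloring_of_sub A F :
  F \subset A -> flip (coloring_of A) F = coloring_of (A :\: F).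
Proof.
move=> FA; apply/ffunP => i; rewrite !ffunE !inE.
by case Fi: (i \in F); rewrite ?(subsetP FA i Fi) ?andbT ?addbF.
Qed.

Lemma majority_coloring_of A i :
  majority_ball (coloring_of A) i = (n < 2 * #|if i \in A then A else ~: A|).
Proof.
rewrite /majority_ball; congr (_ < 2 * _); apply: eq_card => j; rewrite !inE !ffunE.
by case: (i \in A); rewrite ?eqb_id ?eqbF_neg ?inE.
Qed.

Definition no_certain_majority qs c :=
  forall i, exists2 c', consistent qs c c' & ~~ majority_ball c' i.

Lemma even_unsuccessful k qs G :
  ~~ odd n -> query_closed qs G -> G != set0 -> 2 * #|G| <= n -> ~ successful k qs.
Proof.
move=> even_n closedG /set0Pn[i0 Gi0] small_G; case=> _ decide.
have n_half : n = n./2 + n./2 by rewrite addnn -{1}(odd_double_half n) (negbTE even_n).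
have [R [GR _ card_R]] : exists R, [/\ G \subset R, R \subset setT & #|R| = n./2].
  by apply: subset_card_between; rewrite ?subsetT // cardsT card_ord; lia.
case: (decide (coloring_of R)) => [none | [i major]].
  have := none _ (consistent_flip (coloring_of R) closedG) i0.
  rewrite flip_coloring_of_sub // majority_coloring_of !inE Gi0 /= -leqNgt.
  rewrite cardsC_ord cardsD (setIidPr GR) card_R.
  have : 0 < #|G| by rewrite card_gt0; apply/set0Pn; exists i0.
  have := subset_leq_card GR; lia.
have := major _ (consistent_refl qs (coloring_of R)).
by rewrite majority_coloring_of; case: (i \in R); rewrite ?cardsC_ord card_R; lia.
Qed.

Lemma odd_exists_majority c : odd n -> exists i, majority_ball c i.
Proof.
move=> odd_n; have [A ->] : exists A, c = coloring_of A.
  by exists [set j | c j]; apply/ffunP => j; rewrite !ffunE inE.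
have n_half : n = (n./2 + n./2).+1 by rewrite addnn -{1}(odd_double_half n) odd_n.
case: (ltnP n (2 * #|A|)) => [big_A | small_A].
  have /set0Pn[i Ai] : A != set0 by rewrite -card_gt0; lia.
  by exists i; rewrite majority_coloring_of Ai.
have /set0Pn[i CAi] : ~: A != set0 by rewrite -card_gt0 cardsC_ord; lia.
by exists i; move: CAi; rewrite majority_coloring_of inE => /negbTE ->; rewrite cardsC_ord; lia.
Qed.

Lemma odd_unsuccessful k qs c :
  odd n -> no_certain_majority qs c -> ~ successful k qs.
Proof.
move=> odd_n undetermined [_ /(_ c)[none | [i major]]].
  have [i major_i] := odd_exists_majority c odd_n.
  by have := none c (consistent_refl qs c) i; rewrite major_i.
have [c' consistent_c' minor] := undetermined i.
by rewrite major in minor.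
Qed.

Lemma no_certain_majority_of_small_parts qs :
  (forall i, exists F, [/\ query_closed qs F, i \in F & 2 * #|F| <= n]) ->
  no_certain_majority qs (coloring_of set0).
Proof.
move=> parts i; have [F [closedF Fi small_F]] := parts i.
exists (flip (coloring_of set0) F); first exact: consistent_flip.
rewrite flip_coloring_of_disjoint; last by rewrite -setI_eq0 set0I.
by rewrite set0U majority_coloring_of Fi -leqNgt.
Qed.

Lemma no_certain_majority_of_small_union qs B1 B2 :
  query_closed qs B1 -> query_closed qs B2 -> B1 != set0 -> B2 != set0 ->
  [disjoint B1 & B2] -> 2 * #|B1 :|: B2| < n ->
  exists c, no_certain_majority qs c.
Proof.
(* Colour red n./2 balls outside B1 and B2.  A red ball is a minority ball, and
   any other ball becomes one when the part among B1, B2 avoiding it turns red. *)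
move=> closed1 closed2 nz1 nz2 B12 small_U.
have n_half := odd_double_half n; rewrite -addnn in n_half.
have [R [_ R_out card_R]] : exists R, [/\ set0 \subset R, R \subset ~: (B1 :|: B2) & #|R| = n./2].
  apply: subset_card_between; rewrite ?sub0set // cards0 /=.
  rewrite cardsC_ord; lia.
have RB t : [disjoint R & (if t then B1 else B2)].
  by rewrite disjoints_subset (subset_trans R_out) // setCS; case: t; rewrite ?subsetUl ?subsetUr.
exists (coloring_of R) => i.
case Ri: (i \in R).
  exists (coloring_of R); first exact: consistent_refl.
  by rewrite majority_coloring_of Ri card_R -leqNgt; lia.
have [F [closedF nzF Fi RF]] :
    exists F, [/\ query_closed qs F, 0 < #|F|, i \notin F & [disjoint R & F]].
  case B1i: (i \in B1).
    by exists B2; rewrite card_gt0 (disjointFr B12 B1i); split; last exact: (RB false).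
  by exists B1; rewrite card_gt0 B1i; split; last exact: (RB true).
exists (flip (coloring_of R) F); first exact: consistent_flip.
rewrite flip_coloring_of_disjoint // majority_coloring_of !inE Ri (negbTE Fi) /= -leqNgt.
by rewrite cardsC_ord cardsU (disjoint_setI0 RF) cards0 card_R; lia.
Qed.

Lemma unsuccessful_of_two_labels k qs (g : 'I_n -> 'I_n) :
  ~~ odd n -> (forall Q, Q \in qs -> {in Q &, forall x y, g x = g y}) ->
  1 < #|g @: 'I_n| -> ~ successful k qs.
Proof.
move=> even_n g_const /card_gt1P[_ [_ [/imsetP[a _ ->] /imsetP[b _ ->] gab]]].
have [G [closedG Ga Gb]] : exists G, [/\ query_closed qs G, a \in G & b \notin G].
  by exists (g @^-1: [set g a]); rewrite !inE eq_sym; split=> //; apply: query_closed_preimset.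
case: (leqP (2 * #|G|) n) => [small_G | big_G].
  by apply: even_unsuccessful even_n closedG _ small_G; apply/set0Pn; exists a.
apply: (even_unsuccessful even_n (query_closedC closedG)); last by rewrite cardsC_ord; lia.
by apply/set0Pn; exists b; rewrite inE.
Qed.

Lemma unsuccessful_of_three_labels k qs (g : 'I_n -> 'I_n) :
  odd n -> (forall Q, Q \in qs -> {in Q &, forall x y, g x = g y}) ->
  2 < #|g @: 'I_n| -> ~ successful k qs.
Proof.
move=> odd_n g_const labels.
have closed_part (L : {set 'I_n}) : query_closed qs (g @^-1: L) := query_closed_preimset L g_const.
have [c undetermined] : exists c, no_certain_majority qs c; last exact: odd_unsuccessful undetermined.
case: (boolP [exists i, n < 2 * #|g @^-1: [set g i]|]) => [/existsP[i big] | /existsPn small].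
  have : 1 < #|(g @: 'I_n) :\ g i| by rewrite (cardsD1 (g i)) imset_f in labels.
  case/card_gt1P => x [y [/setD1P[xi /imsetP[a _ xE]] /setD1P[yi /imsetP[b _ yE]] xy]].
  subst x y.
  apply: (no_certain_majority_of_small_union (closed_part [set g a]) (closed_part [set g b])).
  - by apply/set0Pn; exists a; rewrite !inE.
  - by apply/set0Pn; exists b; rewrite !inE.
  - by apply/pred0P => j /=; rewrite !inE; apply/negP => /andP[/eqP -> /eqP]; apply/eqP.
  apply: disjoint_majority_card big; rewrite disjoints_subset.
  by apply/subsetP => j; rewrite !inE => /orP[] /eqP ->.
exists (coloring_of set0); apply: no_certain_majority_of_small_parts => i.
by exists (g @^-1: [set g i]); rewrite !inE eqxx; split=> //; rewrite leqNgt small.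
Qed.

Lemma successful_size_bound k qs :
  successful k qs -> n - odd n - 1 <= size qs * (k - 1).
Proof.
move=> succ; have [/allP sizes _] := succ.
have [|g [g_const g_card]] := @exists_query_labelling _ k qs; first by move=> Q /sizes /eqP ->.
have labels : n - size qs * (k - 1) <= #|g @: 'I_n|.
  by rewrite leq_subLR addnC -{1}(card_ord n).
rewrite leqNgt; apply/negP; move: (size qs * (k - 1)) labels => m labels few.
case: (boolP (odd n)) => [odd_n | even_n]; rewrite ?odd_n ?(negbTE even_n) /= in few.
  by apply: (unsuccessful_of_three_labels odd_n g_const) succ; apply: leq_trans labels; lia.
by apply: (unsuccessful_of_two_labels even_n g_const) succ; apply: leq_trans labels; lia.
Qed.

Definition decides qs c :=
  (forall c', consistent qs c c' -> forall i, ~~ majority_ball c' i) \/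
  (exists i, forall c', consistent qs c c' -> majority_ball c' i).

(* On S, every colouring consistent with c coincides with c or with its swap. *)
Definition rigid qs S :=
  forall c c', consistent qs c c' -> {in S &, forall x y, c' x (+) c x = c' y (+) c y}.

Lemma rigid_query qs Q : Q \in qs -> rigid qs Q.
Proof. by move=> Qqs c c' /allP/(_ Q Qqs)/eqP/answer_eqP. Qed.

Lemma rigid_sub qs A S : A \subset S -> rigid qs S -> rigid qs A.
Proof. by move=> /subsetP AS rS c c' cons x y /AS Sx /AS Sy; apply: rS. Qed.

Lemma rigidU qs A S z : z \in A -> z \in S -> rigid qs A -> rigid qs S -> rigid qs (A :|: S).
Proof.
move=> Az Sz rA rS c c' cons.
have to_z w : w \in A :|: S -> c' w (+) c w = c' z (+) c z.
  by rewrite inE => /orP[Aw | Sw]; [exact: rA | exact: rS].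
by move=> x y /to_z -> /to_z ->.
Qed.

Lemma majority_ball_rigid qs c c' i :
  rigid qs setT -> consistent qs c c' -> majority_ball c' i = majority_ball c i.
Proof.
move=> rT cons; rewrite /majority_ball; congr (_ < 2 * _); apply: eq_card => j.
by rewrite !inE; apply: eq_addb_eq; apply: rT; rewrite ?inE.
Qed.

Lemma decides_of_rigid qs c : rigid qs setT -> decides qs c.
Proof.
move=> rT; case: (boolP [exists i, majority_ball c i]) => [/existsP[i major] | /existsPn none].
  by right; exists i => c' cons; rewrite (majority_ball_rigid _ rT cons).
by left=> c' cons i; rewrite (majority_ball_rigid _ rT cons).
Qed.

Lemma majority_ball_of_rigid qs S c c' i : rigid qs S -> consistent qs c c' -> i \in S ->
  n < 2 * #|[set j in S | c j == c i]| -> majority_ball c' i.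
Proof.
move=> rS cons Si big; apply: leq_trans big _; rewrite leq_mul2l /=.
apply/subset_leq_card/subsetP => j; rewrite !inE => /andP[Sj cji].
by rewrite (eq_addb_eq (rS _ _ cons j i Sj Si)).
Qed.

Lemma decides_of_rigid_setC1 qs c z :
  odd n -> 1 < n -> rigid qs [set~ z] -> decides qs c.
Proof.
move=> odd_n n_gt1 rS; right.
have n_half : n = (n./2 + n./2).+1 by rewrite addnn -{1}(odd_double_half n) odd_n.
have colors : #|[set j in [set~ z] | c j == true]| + #|[set j in [set~ z] | c j == false]| = n.-1.
  have := cardsID [set j | c j] [set~ z]; rewrite cardsC1 card_ord => <-.
  by congr (_ + _); apply: eq_card => j; rewrite !inE; case: (c j); rewrite ?andbT ?andbF.
case: (boolP [exists b, n < 2 * #|[set j in [set~ z] | c j == b]|]) => [/existsP[b big] | /existsPn balanced].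
  have /set0Pn[i] : [set j in [set~ z] | c j == b] != set0 by rewrite -card_gt0; lia.
  rewrite inE => /andP[Si /eqP ci].
  by exists i => c' cons; apply: majority_ball_of_rigid rS cons Si _; rewrite ci.
have half b : #|[set j in [set~ z] | c j == b]| = n./2.
  by move: (balanced true) (balanced false); rewrite -!leqNgt; case: b; lia.
have /set0Pn[t] : [set~ z] != set0 by rewrite -card_gt0 cardsC1 card_ord; lia.
rewrite !inE => tz.
exists z => c' cons.
have class_z : z |: [set j in [set~ z] | c j == c' z (+) (c' t (+) c t)] \subset [set j | c' j == c' z].
  apply/subsetP => j; rewrite !inE => /orP[/eqP -> // | /andP[Sj /eqP]].
  have := rS _ _ cons j t; rewrite !inE Sj tz => /(_ isT isT).
  by case: (c' j) (c j) (c' z) (c' t) (c t) => [] [] [] [] [].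
rewrite /majority_ball; apply: leq_trans (leq_mul (leqnn 2) (subset_leq_card class_z)).
by rewrite cardsU1 !inE eqxx /= half; lia.
Qed.

End Majority.

Section Windows.
Variables n k : nat.

(* Consecutive windows share exactly one ball; the start is capped so that
   every window fits into the n balls. *)
Definition window_start j := minn (j * (k - 1)) (n - k).

Definition window j : {set 'I_n} := [set i : 'I_n | window_start j <= i < window_start j + k].

Definition windows q := mkseq window q.

Lemma window_start_le j : k <= n -> window_start j + k <= n.
Proof. by rewrite /window_start; move: (j * _) => m; lia. Qed.

Lemma window_start_lt_succ j : 0 < k -> window_start j.+1 < window_start j + k.
Proof. by rewrite /window_start mulSn; move: (j * _) => m; lia. Qed.

Lemma card_window j : k <= n -> #|window j| = k.
Proof.
move=> /(window_start_le j) start_le.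
have shift_lt (t : 'I_k) : window_start j + t < n by have := ltn_ord t; lia.
pose shift t := Ordinal (shift_lt t).
have shift_inj : injective shift.
  by move=> t u /(congr1 val) /= /eqP; rewrite eqn_add2l => /eqP /val_inj.
rewrite -[RHS](card_ord k) -(card_imset _ shift_inj); apply: eq_card => i.
rewrite inE; apply/idP/imsetP => [/andP[lo hi] | [t _ ->]] /=; last by have := ltn_ord t; lia.
have t_lt : i - window_start j < k by lia.
by exists (Ordinal t_lt) => //; apply: val_inj => /=; lia.
Qed.

Lemma window_in_windows q j : j < q -> window j \in windows q.
Proof. by move=> jq; apply: map_f; rewrite mem_iota leq0n add0n. Qed.

Lemma rigid_windows_prefix q j : 0 < k <= n -> j < q ->
  rigid (windows q) [set i : 'I_n | i < window_start j + k].
Proof.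
move=> /andP[k_gt0 k_le_n]; elim: j => [|j IH] jq.
  apply: rigid_sub (rigid_query (window_in_windows jq)).
  by apply/subsetP => i; rewrite !inE /window_start mul0n min0n => ->.
have start_step := window_start_lt_succ j k_gt0.
have start_lt : window_start j.+1 < n by have := window_start_le j.+1 k_le_n; lia.
pose z := Ordinal start_lt.
apply: rigid_sub (rigidU (z := z) _ _ (IH (ltnW jq)) (rigid_query (window_in_windows jq))).
- apply/subsetP => i; rewrite !inE => lt_i; apply/orP.
  by case: (ltnP i (window_start j + k)) => ?; [left | right; apply/andP; split]; lia.
- by rewrite inE.
- by rewrite inE /= leqnn /=; lia.
Qed.

Lemma windows_successful q :
  1 < k <= n -> 0 < q -> n - odd n - 1 <= q * (k - 1) -> successful k (windows q).
Proof.
move=> /andP[k_gt1 k_le_n] q_gt0 enough; split.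
  by apply/allP => Q /mapP[j _ ->]; rewrite card_window.
have rigid_prefix : rigid (windows q) [set i : 'I_n | i < n - odd n].
  apply: rigid_sub (rigid_windows_prefix (j := q.-1) _ _); last by rewrite prednK.
    apply/subsetP => i; rewrite !inE /window_start.
    move: enough; rewrite -(prednK q_gt0) mulSn /=; move: (q.-1 * _) => m; lia.
  by rewrite k_le_n andbT; lia.
move=> c; case: (boolP (odd n)) => [odd_n | even_n].
  have last_lt : n.-1 < n by lia.
  apply: (@decides_of_rigid_setC1 _ _ c (Ordinal last_lt) odd_n); first lia.
  apply: rigid_sub rigid_prefix; apply/subsetP => i; rewrite !inE odd_n -val_eqE /=.
  by have := ltn_ord i; lia.
apply: decides_of_rigid; apply: rigid_sub rigid_prefix.
by apply/subsetP => i; rewrite !inE (negbTE even_n) subn0.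
Qed.

End Windows.

Lemma leq_ceildiv a b q : 0 < b -> (ceildiv a b <= q) = (a <= q * b).
Proof. by move=> b_gt0; rewrite /ceildiv -ltnS ltn_divLR // mulSn; move: (q * b) => m; lia. Qed.

Lemma N_OM_formulaE k n : N_OM_formula k n = ceildiv (n - odd n - 1) (k - 1).
Proof. by rewrite /N_OM_formula; case: (odd n); rewrite /= ?subn0 // -subnDA. Qed.

Theorem theorem5 (n k : nat) (hk : 2 <= k) (hkn : k <= n) :
  (exists qs : seq {set 'I_n}, size qs = N_OM_formula k n /\ successful k qs) /\
  (forall qs : seq {set 'I_n}, successful k qs -> N_OM_formula k n <= size qs).
Proof.
have k1_gt0 : 0 < k - 1 by lia.
rewrite N_OM_formulaE; split; last by move=> qs /successful_size_bound; rewrite leq_ceildiv.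
exists (windows n k (ceildiv (n - odd n - 1) (k - 1))); split; first exact: size_mkseq.
apply: windows_successful; first by rewrite hk hkn.
  by rewrite ltnNge leq_ceildiv // mul0n; have := odd_double_half n; case: (odd n) => /=; lia.
by rewrite -leq_ceildiv.
Qed.
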